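(* The Shapley cost sharing mechanism is REP-expanded.
   Context: GND instance: finite resource set $E$; players $i \in [N]$ with strategy collections $P_i \subseteq 2^E$ and weight vectors $w_i \in \mathbb{Z}_{\geq 1}^E$; constants $q\in\mathbb{Z}_{\ge1}$, $\alpha_1,\dots,\alpha_q > 1$; for each $e$, $\sigma_e \geq 0$, $\xi_{e,j} \geq 0$ (at least one positive), and $F_e(0)=0$, $F_e(l)=\sigma_e+\sum_j \xi_{e,j} l^{\alpha_j}$ for $l>0$. Profile $p=(p_1,\dots,p_N)$, $p_i\in P_i$; load $l_e^p=\sum_{i: e\in p_i} w_i(e)$; $S_e=\{i: e\in p_i\}$. Shapley cost sharing: for $e\in p_i$, $f_{i,e}(p)=\mathbb{E}\big[F_e\big(\sum_{i'\in S_e^i(\pi_e)}w_{i'}(e)+w_i(e)\big)-F_e\big(\sum_{i'\in S_e^i(\pi_e)}w_{i'}(e)\big)\big]$, where $\pi_e$ is a uniformly random permutation of $S_e$ and $S_e^i(\pi_e)$ is the set of players preceding $i$ in $\pi_e$; $f_{i,e}(p)=0$ if $e\notin p_i$. A cost sharing mechanism $M=\{f_{i,e}\}$ is REP-expanded if for each $j\in[q]$ there are a nonnegative integer $K_j$ and nonnegative constants $x_{k,j}\in[0,\alpha_j-1]$, $y_{k,j}\in[1,\alpha_j]$, $z_{k,j}$ ($k\in[K_j]$), depending only on $\alpha_j$, with $x_{k,j}+y_{k,j}=\alpha_j$, such that for every profile $p$, player $i$ and resource $e\in p_i$: $$f_{i,e}(p)\le \sigma_e+\sum_{j\in[q]}\xi_{e,j}\sum_{k=1}^{K_j}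 z_{k,j}\,(l_e^p-w_i(e))^{x_{k,j}}(w_i(e))^{y_{k,j}}.$$ *)

From HB Require Import structures.
From mathcomp Require Import all_boot all_order all_algebra.
From mathcomp Require Import reals exp.
Set Implicit Arguments. Unset Strict Implicit. Unset Printing Implicit Defensive.
Import Order.TTheory GRing.Theory Num.Theory.
Local Open Scope ring_scope.

Section GND.
Variables (R : realType) (E : finType) (N : nat).

Definition users (p : 'I_N -> {set E}) (e : E) : {set 'I_N} :=
  [set i | e \in p i].

Definition load (p : 'I_N -> {set E}) (w : 'I_N -> E -> nat) (e : E) : nat :=
  (\sum_(i < N | e \in p i) w i e)%N.

Definition Fcost (q : nat) (alpha : 'I_q -> R) (sigma : E -> R)
  (xi : E -> 'I_q -> R) (e : E) (l : nat) : R :=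
  if l == 0%N then 0 else sigma e + \sum_(j < q) xi e j * (l%:R `^ alpha j).

(* Shapley cost share: expectation over a uniformly random ordering s of S_e
   (a permutation of the sequence enum S_e); the predecessors of i in s
   are take (index i s) s. *)
Definition shapley (q : nat) (alpha : 'I_q -> R) (sigma : E -> R)
  (xi : E -> 'I_q -> R) (w : 'I_N -> E -> nat) (p : 'I_N -> {set E})
  (i : 'I_N) (e : E) : R :=
  if e \in p i then
    let orders := permutations (enum (users p e)) in
    (\sum_(s <- orders)
       let pre := (\sum_(i' <- take (index i s) s) w i' e)%N in
       (Fcost alpha sigma xi e (pre + w i e) - Fcost alpha sigma xi e pre))
    / (size orders)%:R
  else 0.

End GND.

(* The Shapley share of player i on resource e is an average, over orderings
   of the users of e, of marginal costs F_e(l + w) - F_e(l), where w = w_i(e),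
   l is the weight of i's predecessors, and l + w <= l_e^p.  Per monomial,
   (l + w)^a - l^a <= C_a (l^(a-1) w + w^a) <= C_a ((l_e^p - w)^(a-1) w + w^a)
   with C_a = 2^(floor a + 1): if l <= w use (l + w)^a <= (2w)^a; otherwise
   write l + w = l (1 + t) with t <= 1 and use
   (1 + t)^a <= (1 + t)^m <= 1 + (2^m - 1) t for m = floor a + 1.
   So K = 2, with exponent pairs (a - 1, 1) and (0, a). *)
From HB Require Import structures.
From mathcomp Require Import all_boot all_order all_algebra.
From mathcomp Require Import reals exp.
From mathcomp Require Import ring lra.
Set Implicit Arguments. Unset Strict Implicit. Unset Printing Implicit Defensive.
Import Order.TTheory GRing.Theory Num.Theory.
Local Open Scope ring_scope.

Section PowerIncrement.
Variable R : realType.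

Lemma exprn_1pt_le_chord (t : R) n :
  0 <= t <= 1 -> (1 + t) ^+ n <= 1 + (2 ^+ n - 1) * t.
Proof.
move=> /andP[t0 t1]; elim: n => [|n IH]; first by rewrite !expr0 subrr mul0r addr0.
have two_pow_ge1 : 1 <= (2 : R) ^+ n by apply: exprn_ege1; lra.
rewrite exprS mulrC exprS.
apply: le_trans (ler_wpM2r _ IH) _; first lra.
have : 0 <= (2 ^+ n - 1) * t * (1 - t) by apply: mulr_ge0; [apply: mulr_ge0|]; lra.
nra.
Qed.

Definition rep_const (a : R) : R := 2 ^+ (Num.truncn a).+1.

Lemma rep_const_ge0 a : 0 <= rep_const a.
Proof. exact: exprn_ge0. Qed.

Lemma powR_addr_le (a u v : R) : 0 < a -> 0 <= u -> 0 <= v ->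
  (u + v) `^ a <= u `^ a + rep_const a * (u `^ (a - 1) * v + v `^ a).
Proof.
move=> a0 u0 v0.
have a_le_m : a <= ((Num.truncn a).+1)%:R by apply/ltW; exact: truncnS_gt.
have C0 := rep_const_ge0 a.
have pua := powR_ge0 u a; have pua1 := powR_ge0 u (a - 1); have pva := powR_ge0 v a.
case: (leP u v) => [uv | vu].
- have : 0 <= rep_const a * (u `^ (a - 1) * v) by rewrite !mulr_ge0.
- have : (u + v) `^ a <= 2 `^ a * v `^ a.
    by rewrite -powRM ?ler0n //; apply: ge0_ler_powR; rewrite ?nnegrE; lra.
  have : 2 `^ a * v `^ a <= rep_const a * v `^ a.
    apply: ler_wpM2r => //; rewrite /rep_const -powR_mulrn ?ler0n //.
    by apply: ler_powR => //; lra.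
  lra.
- have u_gt0 : 0 < u by lra.
  set t := v / u.
  have t01 : 0 <= t <= 1.
    by rewrite divr_ge0 //= ?ler_pdivrMr // ?mul1r; lra.
  have -> : u + v = u * (1 + t) by rewrite /t mulrDr mulr1 mulrCA divff ?mulr1 ?gt_eqF.
  have cross : u `^ a * t = u `^ (a - 1) * v.
    by rewrite /t -(mulr_powRB1 (ltW u_gt0) a0); field; rewrite gt_eqF.
  rewrite powRM; [|lra|lra].
  have : (1 + t) `^ a <= 1 + (rep_const a - 1) * t.
    apply: le_trans _ (exprn_1pt_le_chord _ t01); rewrite -powR_mulrn; last lra.
    by apply: ler_powR; lra.
  move=> /(ler_wpM2l pua); rewrite mulrDr mulr1 mulrCA cross.
  have : 0 <= u `^ (a - 1) * v by rewrite mulr_ge0.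
  have : 0 <= rep_const a * v `^ a by rewrite mulr_ge0.
  lra.
Qed.

Lemma powR_increment_le (a u v l : R) : 1 <= a -> 0 <= u -> 0 <= v -> u + v <= l ->
  (u + v) `^ a - u `^ a <= rep_const a * ((l - v) `^ (a - 1) * v + v `^ a).
Proof.
move=> a1 u0 v0 uvl.
have := @powR_addr_le a u v ltac:(lra) u0 v0.
have : u `^ (a - 1) <= (l - v) `^ (a - 1).
  by apply: ge0_ler_powR; rewrite ?nnegrE; lra.
move=> /(ler_wpM2r v0) /(ler_wpM2l (rep_const_ge0 a)).
lra.
Qed.

Definition rep_x (a : R) (k : nat) : R := if k == 0%N then a - 1 else 0.
Definition rep_y (a : R) (k : nat) : R := if k == 0%N then 1 else a.

Lemma rep_exponents_range (a : R) (k : nat) : 1 < a ->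
  [/\ 0 <= rep_x a k <= a - 1, 1 <= rep_y a k <= a & rep_x a k + rep_y a k = a].
Proof. by move=> a1; rewrite /rep_x /rep_y; case: eqP => _; split; lra. Qed.

Lemma sum_rep_terms (a d v : R) : 0 <= v ->
  \sum_(k < 2) rep_const a * d `^ rep_x a k * v `^ rep_y a k =
  rep_const a * (d `^ (a - 1) * v + v `^ a).
Proof.
move=> v0; rewrite !big_ord_recr big_ord0 /rep_x /rep_y /= add0r.
by rewrite powRr0 powRr1 // mulr1 -!mulrA -mulrDr.
Qed.

End PowerIncrement.

Section ShapleyShare.
Variable R : realType.

Lemma ler_mean_seq (T : eqType) (s : seq T) (f : T -> R) (b : R) :
  s != [::] -> {in s, forall x, f x <= b} -> (\sum_(x <- s) f x) / (size s)%:R <= b.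
Proof.
move=> s_nz fb; rewrite ler_pdivrMr ?ltr0n ?lt0n ?size_eq0 //.
have -> : b * (size s)%:R = \sum_(x <- s) b.
  by rewrite big_const_seq count_predT iter_addr_0 mulr_natr.
by rewrite big_seq [X in _ <= X]big_seq; apply: ler_sum => x /fb.
Qed.

Lemma sum_take_index_le (T : eqType) (s : seq T) (f : T -> nat) (x : T) :
  x \in s -> (\sum_(y <- take (index x s) s) f y + f x <= \sum_(y <- s) f y)%N.
Proof.
move=> xs; rewrite -[in X in (_ <= X)%N](cat_take_drop (index x s) s) big_cat /=.
by rewrite (drop_nth x) ?index_mem // nth_index // big_cons addnA leq_addr.
Qed.

Lemma load_perm_users (E : finType) (N : nat) (p : 'I_N -> {set E})
    (w : 'I_N -> E -> nat) (e : E) (s : seq 'I_N) :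
  perm_eq s (enum (users p e)) -> load p w e = (\sum_(i <- s) w i e)%N.
Proof.
move=> s_perm; rewrite (perm_big _ s_perm) big_enum /load.
by apply: eq_bigl => j; rewrite inE.
Qed.

Lemma shapley_le_increment (E : finType) (N q : nat) (alpha : 'I_q -> R)
    (sigma : E -> R) (xi : E -> 'I_q -> R) (w : 'I_N -> E -> nat)
    (p : 'I_N -> {set E}) (i : 'I_N) (e : E) (b : R) :
  e \in p i ->
  (forall l : nat, (l + w i e <= load p w e)%N ->
     Fcost alpha sigma xi e (l + w i e) - Fcost alpha sigma xi e l <= b) ->
  shapley alpha sigma xi w p i e <= b.
Proof.
move=> ep increment_le; rewrite /shapley ep /=.
apply: ler_mean_seq => [|s].
  apply/eqP => /(congr1 (fun orders => enum (users p e) \in orders)).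
  by rewrite mem_permutations perm_refl.
rewrite mem_permutations => s_perm; apply: increment_le.
rewrite (load_perm_users w s_perm); apply: sum_take_index_le.
by rewrite (perm_mem s_perm) mem_enum inE.
Qed.

Lemma Fcost_increment_le (E : finType) (q : nat) (alpha : 'I_q -> R)
    (sigma : E -> R) (xi : E -> 'I_q -> R) (e : E) (l v : nat) :
  (forall j, 0 < alpha j) -> 0 <= sigma e -> (0 < v)%N ->
  Fcost alpha sigma xi e (l + v) - Fcost alpha sigma xi e l <=
  sigma e + \sum_(j < q) xi e j * ((l + v)%:R `^ alpha j - l%:R `^ alpha j).
Proof.
move=> alpha_gt0 sigma_ge0 v_gt0; rewrite /Fcost addn_eq0 (negbTE (lt0n_neq0 v_gt0)) andbF.
case: eqP => [->|_].
  rewrite subr0 lerD // add0n; apply: ler_sum => j _.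
  by rewrite powR0 ?subr0 ?gt_eqF.
rewrite opprD addrACA subrr add0r -sumrB; apply: ler_wpDl => //.
by apply: ler_sum => j _; rewrite mulrBr.
Qed.

End ShapleyShare.

Theorem lemma6p3 (R : realType) :
  exists (K : R -> nat) (x y z : R -> nat -> R),
    (forall a : R, 1 < a -> forall k : nat, (k < K a)%N ->
       [/\ 0 <= x a k <= a - 1, 1 <= y a k <= a, x a k + y a k = a
         & 0 <= z a k]) /\
    (forall (E : finType) (N : nat) (P : 'I_N -> {set {set E}})
            (w : 'I_N -> E -> nat) (q : nat) (alpha : 'I_q -> R)
            (sigma : E -> R) (xi : E -> 'I_q -> R),
       (0 < q)%N ->
       (forall j, 1 < alpha j) ->
       (forall i e, (1 <= w i e)%N) ->
       (forall e, 0 <= sigma e) ->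
       (forall e j, 0 <= xi e j) ->
       (forall e, exists j, 0 < xi e j) ->
       forall p : 'I_N -> {set E}, (forall i, p i \in P i) ->
       forall (i : 'I_N) (e : E), e \in p i ->
         shapley alpha sigma xi w p i e <=
         sigma e + \sum_(j < q) xi e j *
           \sum_(k < K (alpha j))
             z (alpha j) k
             * (((load p w e)%:R - (w i e)%:R) `^ x (alpha j) k)
             * ((w i e)%:R `^ y (alpha j) k)).
Proof.
exists (fun _ => 2%N), (@rep_x R), (@rep_y R), (fun a _ => rep_const a); split.
  move=> a a1 k _; have [? ? ?] := rep_exponents_range k a1.
  by split=> //; apply: rep_const_ge0.
move=> E N P w q alpha sigma xi _ alpha_gt1 w_ge1 sigma_ge0 xi_ge0 _ p _ i e ep.
apply: shapley_le_increment => // l l_le_load.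
have alpha_gt0 j : 0 < alpha j by have := alpha_gt1 j; lra.
apply: le_trans (Fcost_increment_le xi l alpha_gt0 (sigma_ge0 e) (w_ge1 i e)) _.
apply: lerD => //; apply: ler_sum => j _; apply: ler_wpM2l => //.
rewrite sum_rep_terms // natrD; apply: powR_increment_le; rewrite ?ler0n //.
- by have := alpha_gt1 j; lra.
- by rewrite -natrD ler_nat.
Qed.
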